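(* Let $n\in\mathbb N$. Then $$\tau(\mathfrak P^{(n)}_1)=\tfrac12-\tfrac{1+3(-1)^n}{4n},\qquad \tau(\mathfrak P^{(n)}_i)=\tfrac12-\tfrac{1-(-1)^n}{4n}\ (i=2,3,4),$$ $$\tau(\mathfrak P^{(n)}_1\mathfrak P^{(n)}_i)=\tfrac13\left(1-\tfrac1n\right)\tau(\mathfrak P^{(n)}_1)\quad (i=2,3,4),$$ $$\tau(\mathfrak P^{(n)}_i\mathfrak P^{(n)}_j)=\tfrac12\left(1-\tfrac1n\right)\left(\tau(\mathfrak P^{(n)}_i)-\tfrac13\tau(\mathfrak P^{(n)}_1)\right)\quad (i,j\in\{2,3,4\},\ i\ne j).$$
   Context: $\tau=\frac1n\operatorname{tr}$ is the normalized trace on $M_n(\mathbb C)$. For $n\in\mathbb N$, $\mathfrak P^{(n)}_1,\dots,\mathfrak P^{(n)}_4\in M_n(\mathbb R)$ denote orthogonal projections (real symmetric idempotent matrices) such that (i) $\mathfrak P^{(n)}_1+\dots+\mathfrak P^{(n)}_4=(2-\frac1n)I_n$; (ii) $\operatorname{rk}\mathfrak P^{(n)}_1=\lfloor\frac n2\rfloor-(-1)^n$ and $\operatorname{rk}\mathfrak P^{(n)}_i=\lfloor\frac n2\rfloor$ for $i=2,3,4$; (iii) the only subspaces of $\mathbb C^n$ invariant under all four matrices are $0$ and $\mathbb C^n$. Such quadruples exist for every $n$, and any two of them are simultaneously unitarily equivalent; moreover, any quadruple of orthogonal projections on a Hilbert space summing to $(2-\frac1n)I$ with no nontrivial common invariant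 closed subspace is unitarily equivalent to one of the four cyclic shifts $(\mathfrak P^{(n)}_{\sigma(1)},\dots,\mathfrak P^{(n)}_{\sigma(4)})$, $\sigma$ a power of the cycle $(1\,2\,3\,4)$, and these four are pairwise inequivalent. *)

From HB Require Import structures.
From mathcomp Require Import all_boot all_order all_algebra.
From mathcomp Require Import reals.
From mathcomp.real_closed Require Import complex.
Set Implicit Arguments. Unset Strict Implicit. Unset Printing Implicit Defensive.
Import Order.TTheory GRing.Theory Num.Theory.
Local Open Scope ring_scope.

Definition ntrace (R : realType) (n : nat) (A : 'M[R]_n) : R := (\tr A) / n%:R.

Definition orth_proj (R : realType) (n : nat) (P : 'M[R]_n) : Prop :=
  P^T = P /\ P *m P = P.

Definition cplx (R : realType) (n : nat) (A : 'M[R]_n) : 'M[R[i]]_n :=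
  map_mx (fun x : R => (x%:C)%C) A.

(* A subspace of C^n is encoded as the row space of U (rows are the
   transposes of column vectors of C^n).  It is invariant under the matrix A
   (acting on column vectors x |-> A x) iff for every row v of the space,
   v *m A^T lies in the space, i.e. stablemx U A^T. *)
Definition invariant_sub (R : realType) (n : nat) (U : 'M[R[i]]_n) (A : 'M[R]_n)
  : bool := stablemx U (cplx A)^T.

Definition irreducible_family (R : realType) (n : nat) (k : nat)
  (P : 'I_k -> 'M[R]_n) : Prop :=
  forall U : 'M[R[i]]_n, (forall i, invariant_sub U (P i)) ->
    (U == (0 : 'M[R[i]]_n))%MS \/ (U == (1%:M : 'M[R[i]]_n))%MS.

From HB Require Import structures.
From mathcomp Require Import all_boot all_order all_algebra.
From mathcomp Require Import reals.
From mathcomp.real_closed Require Import complex.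
From mathcomp Require Import ring lra.
Set Implicit Arguments. Unset Strict Implicit. Unset Printing Implicit Defensive.
Import Order.TTheory GRing.Theory Num.Theory.
Local Open Scope ring_scope.

(* The trace identities of the quadruple P_1, ..., P_4 (sum (2 - 1/n) I)
   follow from the sum relation and the ranks alone, by induction on n via
   the "reflection functor" for quadruples of projections.  Given symmetric
   idempotents P_i below a projection E with sum_i P_i = c E (a scaled
   quadruple), we build on F^(4m) a projection E' and a new scaled quadruple
   Q_i below E' with scalar 4 - c/(c-1), whose traces are
     tr E' = (c-1) tr E,   tr Q_i = tr E' - tr P_i,
     tr (Q_i Q_j) = tr E' - tr P_i - tr P_j + tr (P_i P_j) / (c-1)^2.
   For c = 2 - 1/(d+2) and tr E = d+2 the reflected scalar is 2 - 1/(d+1)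
   and tr E' = d+1, so the induction hypothesis yields tr (Q_i Q_j) and
   hence tr (P_i P_j). *)

(* The trace of an idempotent matrix is its rank: factor P = C B through its
   row space; then B C = 1 and tr P = tr (B C) = rank P. *)
Lemma mxtrace_idem (F : fieldType) n (P : 'M[F]_n) :
  P *m P = P -> \tr P = (\rank P)%:R.
Proof.
move=> PP; move: (col_base P) (row_base P) (mulmx_base P) (row_base_free P)
  (col_base_full P) => C B eP Bfree Cfull.
have BC : B *m C = 1%:M.
  have CBCB : C *m (B *m C) *m B = C *m 1%:M *m B.
    by rewrite mulmx1 !mulmxA eP -mulmxA eP PP.
  have CBC : C *m (B *m C) = C *m 1%:M by apply: (row_free_inj Bfree).
  apply: trmx_inj; apply: (row_free_inj (A := C^T)).
    by rewrite /row_free mxrank_tr.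
  by rewrite -!trmx_mul CBC.
by rewrite -{1}eP mxtrace_mulC BC mxtrace1.
Qed.

(* Over an ordered field, a symmetric idempotent P satisfies
   tr P = tr (P P^T) = sum of the squares of its entries, so tr P = 0
   forces P = 0. *)
Lemma sym_idem_trace0 (R : realFieldType) n (P : 'M[R]_n) :
  P^T = P -> P *m P = P -> \tr P = 0 -> P = 0.
Proof.
move=> Ps PP t0.
have : \tr (P *m P^T) = 0 by rewrite Ps PP.
rewrite /mxtrace; under eq_bigr do rewrite !mxE.
have entry_sq i j : 0 <= P i j * P^T j i by rewrite mxE -expr2 sqr_ge0.
move/eqP; rewrite psumr_eq0 => [/allP row0|i _]; last exact: sumr_ge0.
apply/matrixP=> i j; rewrite mxE.
move: (row0 i (mem_index_enum _)); rewrite psumr_eq0 // => /allP col0.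
by move: (col0 j (mem_index_enum _)); rewrite mxE -expr2 sqrf_eq0 => /eqP.
Qed.

(* A quadruple of symmetric idempotents P i, all fixed by E, summing to c E.
   With E = 1 these are the projections of the theorem; the reflection below
   produces such quadruples for a nontrivial E. *)
Definition scaled_quadruple (F : fieldType) m (E : 'M[F]_m)
    (P : 'I_4 -> 'M[F]_m) (c : F) : Prop :=
  [/\ forall i, (P i)^T = P i, forall i, P i *m P i = P i,
      forall i, E *m P i = P i & \sum_i P i = c *: E].

(* The isometric embedding of F^m as the i-th summand of F^(4m) = (F^m)^4. *)
Definition slot (R : pzRingType) m (i : 'I_4) : 'M[R]_(m, 4 * m) :=
  \matrix_(a, b) (b == mxvec_index i a)%:R.

Lemma slot_mul_tr (R : pzRingType) m (i j : 'I_4) :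
  slot R m i *m (slot R m j)^T = if i == j then 1%:M else 0.
Proof.
apply/matrixP => a a'; rewrite !mxE (bigD1 (mxvec_index i a)) //=.
rewrite big1 => [|b hb].
  rewrite !mxE eqxx mul1r addr0 /mxvec_index (inj_eq (@cast_ord_inj _ _ _)).
  by rewrite (inj_eq enum_rank_inj) xpair_eqE; case: (i == j); rewrite ?mxE.
by rewrite !mxE (negbTE hb) mul0r.
Qed.

(* Writing V for the space fixed by E
   and V_i for the range of P i, the stacking map v |-> (v P_i)_i embeds V
   into V_0 (+) ... (+) V_3 inside F^(4m); let E' be the projection onto the
   orthogonal complement of its image, and let P'_i be the projection onto
   the image of V_i under E'. *)
Section Reflection.

Variables (F : fieldType) (m : nat) (c : F) (E : 'M[F]_m) (P : 'I_4 -> 'M[F]_m).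
Hypotheses (c_neq0 : c != 0) (c_neq1 : c != 1).
Hypotheses (Psym : forall i, (P i)^T = P i).
Hypotheses (Pidem : forall i, P i *m P i = P i).
Hypotheses (EP : forall i, E *m P i = P i) (sumP : \sum_i P i = c *: E).

Local Notation slot := (slot F m).

Definition stack : 'M[F]_(m, 4 * m) := \sum_i P i *m slot i.
Definition diagP : 'M[F]_(4 * m) := \sum_i (slot i)^T *m P i *m slot i.
Definition gram : 'M[F]_(4 * m) := stack^T *m stack.

Definition refl_unit : 'M[F]_(4 * m) := diagP - c^-1 *: gram.
Definition lift i : 'M[F]_(4 * m, m) := refl_unit *m (slot i)^T *m P i.
Definition refl_proj i : 'M[F]_(4 * m) :=
  (c / (c - 1)) *: (lift i *m (lift i)^T).
Definition reflection i : 'M[F]_(4 * m) := refl_unit - refl_proj i.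

Lemma stack_slot j : stack *m (slot j)^T = P j.
Proof.
rewrite mulmx_suml (bigD1 j) //= big1 => [|i hij].
  by rewrite -mulmxA slot_mul_tr eqxx mulmx1 addr0.
by rewrite -mulmxA slot_mul_tr (negbTE hij) mulmx0.
Qed.

Lemma slot_stack j : slot j *m stack^T = P j.
Proof. by rewrite -[slot j]trmxK -trmx_mul stack_slot Psym. Qed.

Lemma stack_stack : stack *m stack^T = c *: E.
Proof.
by rewrite mulmx_suml -sumP; apply: eq_bigr => i _; rewrite -mulmxA slot_stack.
Qed.

Lemma E_stack : E *m stack = stack.
Proof.
by rewrite {1}/stack mulmx_sumr; apply: eq_bigr => i _; rewrite mulmxA EP.
Qed.

Lemma slot_diagP j : slot j *m diagP = P j *m slot j.
Proof.
rewrite mulmx_sumr (bigD1 j) //= big1 => [|i hij].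
  by rewrite !mulmxA slot_mul_tr eqxx mul1mx addr0.
by rewrite !mulmxA slot_mul_tr eq_sym (negbTE hij) !mul0mx.
Qed.

Lemma stack_diagP : stack *m diagP = stack.
Proof.
rewrite {1}/stack mulmx_suml; apply: eq_bigr => i _.
by rewrite -mulmxA slot_diagP mulmxA Pidem.
Qed.

Lemma diagP_sym : diagP^T = diagP.
Proof.
rewrite /diagP raddf_sum; apply: eq_bigr => i _ /=.
by rewrite !trmx_mul trmxK Psym mulmxA.
Qed.

Lemma diagP_idem : diagP *m diagP = diagP.
Proof.
rewrite {1}/diagP mulmx_suml; apply: eq_bigr => i _.
by rewrite -!mulmxA slot_diagP !mulmxA -(mulmxA _ (P i) (P i)) Pidem.
Qed.

Lemma diagP_gram : diagP *m gram = gram.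
Proof. by rewrite /gram mulmxA -diagP_sym -trmx_mul stack_diagP. Qed.

Lemma gram_diagP : gram *m diagP = gram.
Proof. by rewrite /gram -mulmxA stack_diagP. Qed.

Lemma gram_idem : gram *m gram = c *: gram.
Proof.
rewrite /gram mulmxA -(mulmxA _ stack) stack_stack.
by rewrite -scalemxAr -scalemxAl -mulmxA E_stack.
Qed.

Lemma refl_unit_sym : refl_unit^T = refl_unit.
Proof.
by rewrite /refl_unit linearB /= linearZ /= diagP_sym /gram trmx_mul trmxK.
Qed.

Lemma refl_unit_idem : refl_unit *m refl_unit = refl_unit.
Proof.
rewrite /refl_unit mulmxBl !mulmxBr -!scalemxAl -!scalemxAr.
rewrite diagP_idem diagP_gram gram_diagP gram_idem !scalerA -mulrA mulVf //.
by rewrite mulr1 subrr subr0.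
Qed.

Lemma diagP_refl_unit : diagP *m refl_unit = refl_unit.
Proof. by rewrite /refl_unit mulmxBr -scalemxAr diagP_idem diagP_gram. Qed.

Lemma slot_refl_unit_slot i j : slot j *m refl_unit *m (slot i)^T =
  (if j == i then P j else 0) - c^-1 *: (P j *m P i).
Proof.
rewrite /refl_unit mulmxBr mulmxBl -scalemxAr -scalemxAl slot_diagP.
rewrite -mulmxA slot_mul_tr.
rewrite /gram mulmxA slot_stack -mulmxA stack_slot.
by case: (j == i); rewrite ?mulmx1 ?mulmx0.
Qed.

Lemma lift_tr i : (lift i)^T = P i *m slot i *m refl_unit.
Proof. by rewrite !trmx_mul Psym trmxK refl_unit_sym mulmxA. Qed.

Lemma lift_tr_lift i j : (lift j)^T *m lift i =
  (if j == i then P i else 0) - c^-1 *: (P j *m P i).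
Proof.
have -> : (lift j)^T *m lift i
    = P j *m (slot j *m refl_unit *m (slot i)^T) *m P i.
  rewrite lift_tr /lift !mulmxA -(mulmxA _ refl_unit refl_unit).
  by rewrite refl_unit_idem.
rewrite slot_refl_unit_slot mulmxBr mulmxBl -scalemxAr -scalemxAl.
rewrite [P j *m (P j *m _)]mulmxA Pidem -[P j *m P i *m _]mulmxA Pidem.
by case: eqP => [->|_]; rewrite ?mulmx0 ?mul0mx // !Pidem.
Qed.

Lemma refl_unit_lift i : refl_unit *m lift i = lift i.
Proof. by rewrite /lift !mulmxA refl_unit_idem. Qed.

Lemma lift_P i : lift i *m P i = lift i.
Proof. by rewrite /lift -mulmxA Pidem. Qed.

Lemma sum_lift : \sum_i lift i *m (lift i)^T = refl_unit.
Proof.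
transitivity (refl_unit *m diagP *m refl_unit); last first.
  by rewrite -mulmxA diagP_refl_unit refl_unit_idem.
rewrite /diagP mulmx_sumr mulmx_suml; apply: eq_bigr => i _.
by rewrite lift_tr /lift !mulmxA -(mulmxA _ (P i) (P i)) Pidem.
Qed.

Lemma lift_tr_lift_diag i : (lift i)^T *m lift i = (1 - c^-1) *: P i.
Proof. by rewrite lift_tr_lift eqxx Pidem scalerBl scale1r. Qed.

Let lift_scale : c / (c - 1) * (1 - c^-1) = 1.
Proof. by field; rewrite subr_eq0 c_neq1 c_neq0. Qed.

Lemma refl_proj_sym i : (refl_proj i)^T = refl_proj i.
Proof. by rewrite linearZ /= trmx_mul trmxK. Qed.

Lemma refl_proj_idem i : refl_proj i *m refl_proj i = refl_proj i.
Proof.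
rewrite /refl_proj -scalemxAl -scalemxAr scalerA.
rewrite -mulmxA [(lift i)^T *m _]mulmxA lift_tr_lift_diag -scalemxAl.
by rewrite -scalemxAr scalerA mulmxA lift_P -mulrA lift_scale mulr1.
Qed.

Lemma refl_unit_proj i : refl_unit *m refl_proj i = refl_proj i.
Proof. by rewrite /refl_proj -scalemxAr mulmxA refl_unit_lift. Qed.

Lemma refl_proj_unit i : refl_proj i *m refl_unit = refl_proj i.
Proof.
by rewrite -[refl_proj i]refl_proj_sym -refl_unit_sym -trmx_mul refl_unit_proj.
Qed.

Lemma sum_refl_proj : \sum_i refl_proj i = (c / (c - 1)) *: refl_unit.
Proof. by rewrite -sum_lift scaler_sumr. Qed.

Lemma tr_refl_unit : \tr refl_unit = (c - 1) * \tr E.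
Proof.
have tr_diagP : \tr diagP = c * \tr E.
  rewrite -mxtraceZ -sumP /diagP !raddf_sum; apply: eq_bigr => i _ /=.
  by rewrite mxtrace_mulC mulmxA slot_mul_tr eqxx mul1mx.
have tr_gram : \tr gram = c * \tr E.
  by rewrite mxtrace_mulC stack_stack mxtraceZ.
by rewrite raddfB /= mxtraceZ tr_diagP tr_gram; field.
Qed.

Lemma tr_refl_proj i : \tr (refl_proj i) = \tr (P i).
Proof.
rewrite mxtraceZ mxtrace_mulC lift_tr_lift_diag mxtraceZ.
by rewrite mulrA lift_scale mul1r.
Qed.

(* For i != j, tr (P'_i P'_j) = (c/(c-1))^2 c^-2 tr (P_j P_i P_i P_j). *)
Lemma tr_refl_proj_mul i j : i != j ->
  \tr (refl_proj i *m refl_proj j) = \tr (P i *m P j) / (c - 1) ^+ 2.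
Proof.
move=> neq_ij; rewrite /refl_proj -scalemxAl -scalemxAr !mxtraceZ.
have -> : \tr (lift i *m (lift i)^T *m (lift j *m (lift j)^T))
    = \tr ((lift j)^T *m lift i *m ((lift i)^T *m lift j)).
  by rewrite !mulmxA mxtrace_mulC !mulmxA.
rewrite !lift_tr_lift (negbTE neq_ij) eq_sym (negbTE neq_ij).
rewrite !sub0r mulNmx mulmxN opprK -scalemxAl -scalemxAr !mxtraceZ.
have -> : P j *m P i *m (P i *m P j) = P j *m P i *m P j.
  by rewrite -mulmxA [P i *m (P i *m _)]mulmxA Pidem mulmxA.
rewrite mxtrace_mulC mulmxA Pidem mxtrace_mulC.
by field; rewrite subr_eq0 c_neq1 c_neq0.
Qed.

Lemma reflection_quadruple :
  scaled_quadruple refl_unit reflection (4 - c / (c - 1)).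
Proof.
rewrite /reflection; split=> [i|i|i|].
- by rewrite linearB /= refl_unit_sym refl_proj_sym.
- rewrite mulmxBl (mulmxBr refl_unit) (mulmxBr (refl_proj i)) refl_unit_idem.
  by rewrite refl_unit_proj refl_proj_unit refl_proj_idem subrr subr0.
- by rewrite (mulmxBr refl_unit) refl_unit_idem refl_unit_proj.
- rewrite sumrB sumr_const card_ord sum_refl_proj.
  by rewrite scalerBl scaler_nat.
Qed.

Lemma tr_reflection i : \tr (reflection i) = (c - 1) * \tr E - \tr (P i).
Proof. by rewrite /reflection raddfB /= tr_refl_unit tr_refl_proj. Qed.

Lemma tr_reflection_mul i j : i != j ->
  \tr (reflection i *m reflection j) = (c - 1) * \tr E - \tr (P i) - \tr (P j)
    + \tr (P i *m P j) / (c - 1) ^+ 2.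
Proof.
move=> neq_ij.
have -> : reflection i *m reflection j
    = refl_unit - refl_proj j - (refl_proj i - refl_proj i *m refl_proj j).
  rewrite /reflection mulmxBl (mulmxBr refl_unit) (mulmxBr (refl_proj i)).
  by rewrite refl_unit_idem refl_unit_proj refl_proj_unit.
rewrite raddfB (raddfB _ refl_unit) (raddfB _ (refl_proj i)) /=.
rewrite tr_refl_unit !tr_refl_proj tr_refl_proj_mul //; ring.
Qed.

End Reflection.

(* For a quadruple with scalar
   2 - 1/d and tr E = d, the traces of P_1 and of P_2, P_3, P_4 are the
   following values; reflection maps the data for d + 2 to those for d + 1. *)
Definition first_trace (R : numFieldType) (d : nat) : R :=
  (2 * d%:R - 1 - 3 * (-1) ^+ d) / 4.
Definition other_trace (R : numFieldType) (d : nat) : R :=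
  (2 * d%:R - 1 + (-1) ^+ d) / 4.

Lemma half_natr (R : numFieldType) d :
  (d./2)%:R = (2 * d%:R - 1 + (-1) ^+ d) / 4 :> R.
Proof.
rewrite -signr_odd; have := odd_double_half d; set h := d./2.
by case: (odd d) => /= <-; rewrite ?natrD -muln2 natrM; field.
Qed.

Lemma reflected_scalar (R : realFieldType) d (c := 2 - (d.+2)%:R^-1 : R) :
  [/\ c != 0, c != 1, (c - 1) * (d.+2)%:R = (d.+1)%:R
    & 4 - c / (c - 1) = 2 - (d.+1)%:R^-1].
Proof.
have d_ge0 : 0 <= d%:R :> R := ler0n R d.
have c1 : c - 1 = (d.+1)%:R / (d.+2)%:R by rewrite /c; field; lra.
have c_def : c = (d.+1)%:R / (d.+2)%:R + 1 by rewrite -c1 subrK.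
split.
- by rewrite c_def gt_eqF // addr_gt0 ?divr_gt0 ?ltr0n.
- by rewrite -subr_eq0 c1 mulf_neq0 ?invr_eq0 ?pnatr_eq0.
- by rewrite c1 divfK ?pnatr_eq0.
- by rewrite c_def; field; lra.
Qed.

Lemma first_trace_reflect (R : realFieldType) d :
  (d.+1)%:R - first_trace R d.+2 = first_trace R d.+1.
Proof. by rewrite /first_trace !exprS; field. Qed.

Lemma other_trace_reflect (R : realFieldType) d :
  (d.+1)%:R - other_trace R d.+2 = other_trace R d.+1.
Proof. by rewrite /other_trace !exprS; field. Qed.

Lemma quadruple_traces (R : realFieldType) d m (E : 'M[R]_m)
    (P : 'I_4 -> 'M[R]_m) :
  (0 < d)%N -> scaled_quadruple E P (2 - d%:R^-1) -> \tr E = d%:R ->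
  \tr (P 0) = first_trace R d ->
  (forall i, i != 0 -> \tr (P i) = other_trace R d) ->
  (forall i, i != 0 -> \tr (P 0 *m P i) = 3^-1 * (1 - d%:R^-1) * \tr (P 0)) /\
  (forall i j, i != 0 -> j != 0 -> i != j ->
     \tr (P i *m P j) = 2^-1 * (1 - d%:R^-1) * (\tr (P i) - 3^-1 * \tr (P 0))).
Proof.
move: m E P; elim: d => [//|[|d] IH] m E P _ [Psym Pidem EP sumP] trE tr0 tri.
  (* d = 1: the P_i with i != 0 have trace 0, hence vanish, and 1 - 1/d = 0. *)
  have P_eq0 i : i != 0 -> P i = 0.
    move=> nz_i; apply: sym_idem_trace0 => //.
    by rewrite tri // /other_trace expr1; ring.
  have -> : 1 - (1%:R : R)^-1 = 0 by rewrite invr1 subrr.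
  split=> [i nz_i|i j nz_i _ _]; rewrite mulr0 mul0r (P_eq0 i nz_i).
    by rewrite mulmx0 mxtrace0.
  by rewrite mul0mx mxtrace0.
have [c_neq0 c_neq1 tr_refl sum_refl] := reflected_scalar R d.
set c := 2 - (d.+2)%:R^-1 in sumP c_neq0 c_neq1 tr_refl sum_refl.
have := reflection_quadruple c_neq0 c_neq1 Psym Pidem EP sumP.
rewrite sum_refl => Qquad.
have trE' : \tr (refl_unit c P) = (d.+1)%:R.
  by rewrite (tr_refl_unit (E := E)) // -tr_refl -trE.
have trQ i : \tr (reflection c P i) = (d.+1)%:R - \tr (P i).
  by rewrite (tr_reflection (E := E)) // -tr_refl -trE.
have trQ0 : \tr (reflection c P 0) = first_trace R d.+1.
  by rewrite trQ tr0 first_trace_reflect.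
have trQi i : i != 0 -> \tr (reflection c P i) = other_trace R d.+1.
  by move=> nz_i; rewrite trQ tri // other_trace_reflect.
have [IH0 IHij] := IH _ _ _ isT Qquad trE' trQ0 trQi.
have c1_neq0 : c - 1 != 0 by rewrite subr_eq0.
have trPP i j : i != j -> \tr (P i *m P j) = (c - 1) ^+ 2 *
    (\tr (reflection c P i *m reflection c P j) - (d.+1)%:R
     + \tr (P i) + \tr (P j)).
  move=> neq_ij; rewrite (tr_reflection_mul (E := E)) // -tr_refl -trE.
  by field.
have d_ge0 : 0 <= d%:R :> R := ler0n R d.
split=> [i nz_i|i j nz_i nz_j neq_ij].
- rewrite trPP 1?eq_sym // IH0 // !trQ tr0 tri // /c /first_trace /other_trace.
  by rewrite !exprS; field; lra.
- rewrite trPP // IHij // !trQ tr0 !tri // /c /first_trace /other_trace.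
  by rewrite !exprS; field; lra.
Qed.

(* P 0, P 1, P 2, P 3 stand for the paper's P_1, P_2, P_3, P_4. *)
Theorem mainTheorem3 (R : realType) (n : nat) (P : 'I_4 -> 'M[R]_n) :
  (0 < n)%N ->
  (forall i, orth_proj (P i)) ->
  \sum_(i < 4) P i = (2 - n%:R^-1)%:M ->
  (\rank (P 0))%:Z = (n./2)%:Z - (-1) ^+ n ->
  (forall i : 'I_4, i != 0 -> (\rank (P i))%:Z = (n./2)%:Z) ->
  irreducible_family P ->
  ntrace (P 0) = 2^-1 - (1 + 3 * (-1) ^+ n) / (4 * n%:R)
  /\ (forall i : 'I_4, i != 0 ->
        ntrace (P i) = 2^-1 - (1 - (-1) ^+ n) / (4 * n%:R))
  /\ (forall i : 'I_4, i != 0 ->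
        ntrace (P 0 *m P i) = 3^-1 * (1 - n%:R^-1) * ntrace (P 0))
  /\ (forall i j : 'I_4, i != 0 -> j != 0 -> i != j ->
        ntrace (P i *m P j)
          = 2^-1 * (1 - n%:R^-1) * (ntrace (P i) - 3^-1 * ntrace (P 0))).
Proof.
move=> n_gt0 proj_P sumP rank0 rank_i _.
have quad : scaled_quadruple 1%:M P (2 - n%:R^-1).
  by split=> [i|i|i|]; rewrite ?mul1mx ?sumP ?scalemx1 //; case: (proj_P i).
have tr_rank i (v : int) : (\rank (P i))%:Z = v -> \tr (P i) = v%:~R.
  by move=> <-; rewrite mxtrace_idem ?pmulrn //; case: (proj_P i).
have tr0 : \tr (P 0) = first_trace R n.
  rewrite (tr_rank 0 _ rank0) intrB intr_sign -pmulrn half_natr /first_trace.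
  by field.
have tri i : i != 0 -> \tr (P i) = other_trace R n.
  by move=> nz_i; rewrite (tr_rank i _ (rank_i i nz_i)) -pmulrn half_natr.
have [tr0i trij] := quadruple_traces n_gt0 quad (mxtrace1 _ _) tr0 tri.
have n_neq0 : n%:R != 0 :> R by rewrite pnatr_eq0 -lt0n.
rewrite /ntrace; split; [|split; [|split]].
- by rewrite tr0 /first_trace; field.
- by move=> i nz_i; rewrite tri // /other_trace; field.
- by move=> i nz_i; rewrite tr0i // mulrA.
- by move=> i j nz_i nz_j neq_ij; rewrite trij //; field.
Qed.
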